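(* Let $\mathcal A=\{G\in\mathcal G:\ \overline G\text{ is Abelian}\}$ (a closed subspace of $\mathcal G$) and let $A\in\mathcal G$ be such that $\overline A\cong\bigoplus_{p\in\mathbf P}\mathbb Z[p^\infty]^{(\mathbb N)}$. Then the isomorphism class $\mathcal I_{\overline A}=\{G\in\mathcal G:\ \overline G\cong\overline A\}$ is comeager in $\mathcal A$.
   Context: Let $\mathbb N=\{1,2,3,\dots\}$. Equip $\mathbb N^{\mathbb N\times\mathbb N}$ with the product topology of the discrete topology on $\mathbb N$. Let $\mathcal G$ be the subspace consisting of those $A\in\mathbb N^{\mathbb N\times\mathbb N}$ that are the multiplication table of a group on the underlying set $\mathbb N$ whose identity element is $1$. For $G\in\mathcal G$, $\overline G$ denotes the group on $\mathbb N$ with multiplication table $G$. $\mathbf P$ is the set of primes, $\mathbb Z[p^\infty]$ is the Prüfer $p$-group, and $K^{(\mathbb N)}$ denotes the direct sum of countably infinitely many copies of $K$. ($\overline A$ is the unique countable divisible Abelian torsion group into which every finite Abelian group embeds.) *)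

From mathcomp Require Import all_boot all_order all_algebra.
Set Implicit Arguments. Unset Strict Implicit. Unset Printing Implicit Defensive.
Import Order.TTheory GRing.Theory Num.Theory.

(* Convention: the paper's underlying set N = {1,2,3,...} is represented by
   Rocq's nat = {0,1,2,...} via n |-> n+1; hence the paper's identity 1 is 0 here.
   This relabelling is a homeomorphism of N^(N x N) preserving everything. *)

Definition table := nat -> nat -> nat.

Definition is_group_table (M : table) : Prop :=
  (forall x y z, M (M x y) z = M x (M y z)) /\
  (forall x, M 0 x = x /\ M x 0 = x) /\
  (forall x, exists y, M x y = 0 /\ M y x = 0).

Definition abelian_tables (M : table) : Prop :=
  is_group_table M /\ forall x y, M x y = M y x.

Definition iso_tables (M M' : table) : Prop :=
  exists f : nat -> nat, bijective f /\ forall x y, f (M x y) = M' (f x) (f y).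

(* The group  (+)_{p prime} Z[p^oo]^(N), concretely: finitely supported
   families h : nat (prime index p) -> nat (copy index i) -> rat, where
   h p i lies in Z[p^oo] = {a / p^k + Z} represented by rationals in [0,1)
   whose reduced denominator is a power of p; h p i = 0 if p is not prime.
   The group law is pointwise addition mod 1. *)
Definition prufer_sum_elt (h : nat -> nat -> rat) : Prop :=
  (forall p i, 0 <= h p i < 1)%R /\
  (forall p i, ~~ prime p -> h p i = 0%R) /\
  (forall p i, prime p -> exists k : nat, denq (h p i) = (p ^ k)%:Z%R) /\
  (exists N, forall p i, (N <= p)%N \/ (N <= i)%N -> h p i = 0%R).

Definition add_mod1 (a b : rat) : rat :=
  (if 1 <= a + b then a + b - 1 else a + b)%R.

Definition prufer_sum_add (h h' : nat -> nat -> rat) : nat -> nat -> rat :=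
  fun p i => add_mod1 (h p i) (h' p i).

Definition iso_to_prufer_sum (M : table) : Prop :=
  exists f : nat -> (nat -> nat -> rat),
    (forall x y, f x = f y -> x = y) /\
    (forall h, prufer_sum_elt h <-> exists x, f x = h) /\
    (forall x y, f (M x y) = prufer_sum_add (f x) (f y)).

(* Topology of N^(N x N) (product of discrete): the sets
   {M' | agree n M M'} form a neighbourhood base at M. *)
Definition agree (n : nat) (M M' : table) : Prop :=
  forall x y, (x < n)%N -> (y < n)%N -> M x y = M' x y.

Definition openIn (S U : table -> Prop) : Prop :=
  (forall M, U M -> S M) /\
  (forall M, U M -> exists n, forall M', S M' -> agree n M M' -> U M').

Definition denseIn (S U : table -> Prop) : Prop :=
  forall M n, S M -> exists M', S M' /\ U M' /\ agree n M M'.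

Definition comeagerIn (S C : table -> Prop) : Prop :=
  exists U : nat -> (table -> Prop),
    (forall k, openIn S (U k) /\ denseIn S (U k)) /\
    (forall M, S M -> (forall k, U k M) -> C M).

(* A countable abelian group that is torsion, divisible and has an infinite
   p-socle for every prime p is isomorphic to (+)_p Z[p^oo]^(N): a
   back-and-forth argument extends finite partial isomorphisms (finite
   families satisfying the same integer relations) one element at a time.
   When the new element g has composite order m modulo the finite span, one
   first adjoins g *+ (m / p), matched with a p-th root chosen outside the
   span, which the infinite socles provide.
   On tables, these three properties form a countable conjunction of
   conditions, each witnessed by finitely many entries: a G_delta set. It is
   dense: for an abelian table M and a finite block [0, N) containing all
   products of elements below n, some homomorphism from M into A separates
   the points of the block (A is divisible with nontrivial socles, and
   A * A ~ A lets finitely many homomorphisms be combined), and transporting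
   A along a permutation of nat extending it yields a table isomorphic to A
   that agrees with M below n. *)

From HB Require Import structures.
From mathcomp Require Import all_boot all_order all_algebra.
From mathcomp Require Import cyclic lra ring.
From Stdlib Require Import Classical ClassicalEpsilon FunctionalExtensionality.
Set Implicit Arguments. Unset Strict Implicit. Unset Printing Implicit Defensive.
Import Order.TTheory GRing.Theory Num.Theory.
Local Open Scope ring_scope.

(** * Integer relations in finite families *)

Lemma ex_least_nat (P : nat -> Prop) :
  (exists n, P n) -> exists n, P n /\ forall m, (m < n)%N -> ~ P m.
Proof.
case=> n; elim/ltn_ind: n => n IHn Pn.
have [[m [ltmn Pm]] | nosmaller] := classic (exists m, (m < n)%N /\ P m).
  exact: IHn Pm.
by exists n; split=> // m ltmn Pm; apply: nosmaller; exists m.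
Qed.

Definition upd (T : Type) (u : nat -> T) (n : nat) (x : T) : nat -> T :=
  fun i => if i == n then x else u i.

Section Combinations.
Variable V : zmodType.
Implicit Types (u : nat -> V) (c : nat -> int) (x g : V).

Definition zcomb u n c : V := \sum_(i < n) u i *~ c i.

Definition zspan u n x : Prop := exists c, zcomb u n c = x.

Lemma zcomb0n u c : zcomb u 0 c = 0.
Proof. by rewrite /zcomb big_ord0. Qed.

Lemma zcombS u n c : zcomb u n.+1 c = zcomb u n c + u n *~ c n.
Proof. by rewrite /zcomb big_ord_recr. Qed.

Lemma eq_zcomb u u' c c' n : (forall i, (i < n)%N -> u i = u' i /\ c i = c' i) ->
  zcomb u n c = zcomb u' n c'.
Proof. by move=> eq_uc; apply: eq_bigr => i _; have [-> ->] := eq_uc i (ltn_ord i). Qed.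

Lemma zcomb_upd u n x c : zcomb (upd u n x) n.+1 c = zcomb u n c + x *~ c n.
Proof.
rewrite zcombS /upd eqxx; congr (_ + _); apply: eq_zcomb => i ltin.
by rewrite (ltn_eqF ltin).
Qed.

Lemma zcomb0 u n : zcomb u n (fun=> 0) = 0.
Proof. by rewrite /zcomb big1 // => i _; rewrite mulrz0. Qed.

Lemma zcombD u n c c' : zcomb u n (fun i => c i + c' i) = zcomb u n c + zcomb u n c'.
Proof. by rewrite /zcomb -big_split; apply: eq_bigr => i _; rewrite mulrzDr. Qed.

Lemma zcombN u n c : zcomb u n (fun i => - c i) = - zcomb u n c.
Proof. by rewrite /zcomb -sumrN; apply: eq_bigr => i _; rewrite mulrNz. Qed.

Lemma zcombMz u n c k : zcomb u n (fun i => c i * k) = zcomb u n c *~ k.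
Proof. by rewrite /zcomb mulrz_suml; apply: eq_bigr => i _; rewrite mulrzA. Qed.

Lemma zcomb_delta u n i : (i < n)%N -> zcomb u n (fun j => (j == i)%:Z) = u i.
Proof.
move=> ltin; rewrite /zcomb (bigD1 (Ordinal ltin)) //= eqxx mulr1z big1 ?addr0 //.
by move=> j /negPf neji; rewrite -[_ == i]/(j == Ordinal ltin) neji mulr0z.
Qed.

Lemma zspan0 u n : zspan u n 0.
Proof. by exists (fun=> 0); rewrite zcomb0. Qed.

Lemma zspanB u n x y : zspan u n x -> zspan u n y -> zspan u n (x - y).
Proof. by move=> [c <-] [c' <-]; exists (fun i => c i - c' i); rewrite zcombD zcombN. Qed.

Lemma zspanMz u n x k : zspan u n x -> zspan u n (x *~ k).
Proof. by move=> [c <-]; exists (fun i => c i * k); rewrite zcombMz. Qed.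

Lemma zspan0n u x : zspan u 0 x <-> x = 0.
Proof. by split=> [[c <-]|->]; [rewrite zcomb0n | apply: zspan0]. Qed.

Lemma zspan_upd_rel u n g c : zcomb (upd u n g) n.+1 c = 0 -> zspan u n (g *~ c n).
Proof.
rewrite zcomb_upd => rel; exists (fun i => - c i).
by rewrite zcombN; apply/eqP; rewrite eq_sym -addr_eq0 addrC rel.
Qed.

Lemma zspan_mulz_abs u n g j : zspan u n (g *~ j) -> zspan u n (g *+ `|j|%N).
Proof.
have [j_ge0 | j_lt0] := lerP 0 j; first by rewrite -[_ *+ _]/(g *~ `|j|%N) gez0_abs.
rewrite -[_ *+ _]/(g *~ `|j|%N) ltz0_abs // => /(zspanMz (-1)).
by rewrite -mulrzA mulrN1.
Qed.

Lemma zspan_mulz_ideal u n g :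
  exists m : nat, forall j : int, zspan u n (g *~ j) <-> (m %| j)%Z.
Proof.
have [ex | none] := classic (exists m, (0 < m)%N /\ zspan u n (g *+ m)).
  have [m [[m_gt0 spanm] m_min]] := ex_least_nat ex.
  exists m => j; split=> [spanj | /dvdzP [q ->]]; last first.
    by rewrite mulrC mulrzA; apply: zspanMz.
  have m_neq0 : m%:Z != 0 by rewrite eqz_nat -lt0n.
  apply/dvdz_mod0P; set r := (j %% m)%Z.
  have r_ge0 : 0 <= r := modz_ge0 j m_neq0.
  have spanr : zspan u n (g *~ r).
    rewrite (_ : g *~ r = g *~ j - g *~ m%:Z *~ (j %/ m)%Z); last first.
      by rewrite mulrzA_C -mulrzBr.
    by apply: zspanB => //; apply: zspanMz.
  apply/eqP; rewrite -absz_eq0; apply/negPn/negP; rewrite -lt0n => r_gt0.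
  apply: (m_min `|r|%N); last by split=> //; apply: zspan_mulz_abs.
  by rewrite -ltz_nat gez0_abs // ltz_pmod ?ltz_nat.
exists 0%N => j; rewrite dvd0z; split=> [spanj | /eqP ->]; last first.
  by rewrite mulr0z; apply: zspan0.
rewrite -absz_eq0; apply/negPn/negP; rewrite -lt0n => j_gt0.
by apply: none; exists `|j|%N; split=> //; apply: zspan_mulz_abs.
Qed.

Lemma zcomb_upd_lift u n x (m : nat) c0 c q :
  zcomb u n c0 = x *+ m -> c n = q * m%:Z ->
  zcomb (upd u n x) n.+1 c = zcomb u n (fun i => c i + c0 i * q).
Proof. by move=> def_x cn; rewrite zcomb_upd zcombD zcombMz def_x cn mulrC mulrzA. Qed.

Lemma zcomb_upd_eq0P u n g (m : nat) c0 :
  (forall j, zspan u n (g *~ j) <-> (m %| j)%Z) -> zcomb u n c0 = g *+ m ->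
  forall c, zcomb (upd u n g) n.+1 c = 0 <->
  exists2 q, c n = q * m%:Z & zcomb u n (fun i => c i + c0 i * q) = 0.
Proof.
move=> ideal def_g c; split=> [rel | [q cn rel]]; last by rewrite (zcomb_upd_lift def_g cn).
have /ideal/dvdzP [q cn] := zspan_upd_rel rel.
by exists q; rewrite // -(zcomb_upd_lift def_g cn).
Qed.

Lemma zcomb_upd_drop u n a b c :
  zcomb (upd (upd u n a) n.+1 b) n.+2 (upd (upd c n 0) n.+1 (c n)) =
  zcomb (upd u n b) n.+1 c.
Proof.
rewrite !zcomb_upd /upd !eqxx (ltn_eqF (ltnSn n)) mulr0z addr0; congr (_ + _).
by apply: eq_zcomb => i ltin; rewrite (ltn_eqF ltin) (ltn_eqF (leqW ltin)).
Qed.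

End Combinations.

(** * Countable divisible torsion groups with infinite socles *)

Definition torsion (V : zmodType) := forall x : V, exists2 m, (0 < m)%N & x *+ m = 0.

Definition divisible (V : zmodType) := forall (x : V) p, prime p -> exists y, y *+ p = x.

Definition infinite_socles (V : zmodType) :=
  forall p, prime p -> forall s : seq V, exists2 z, z *+ p = 0 & z \notin s.

Definition prufer_type (V : zmodType) := [/\ torsion V, divisible V & infinite_socles V].

Section TorsionDivisible.
Variable V : zmodType.

Lemma divisible_mulrn : divisible V -> forall (x : V) m, (0 < m)%N -> exists y, y *+ m = x.
Proof.
move=> divV x m; elim/ltn_ind: m x => m IHm x m_gt0.
have [m_le1 | m_gt1] := leqP m 1.
  by exists x; rewrite (_ : m = 1%N) //; apply/eqP; rewrite eqn_leq m_le1.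
have p_prime := pdiv_prime m_gt1; have p_gt1 := prime_gt1 p_prime.
have mp_gt0 : (0 < m %/ pdiv m)%N by rewrite divn_gt0 ?pdiv_gt0 // dvdn_leq // pdiv_dvd.
have [y def_x] := IHm _ (ltn_Pdiv p_gt1 m_gt0) x mp_gt0.
have [z def_y] := divV y _ p_prime.
by exists z; rewrite -(divnK (pdiv_dvd m)) mulnC mulrnA def_y.
Qed.

Lemma zspan_finite : torsion V -> forall u n, exists L : seq V, forall x, zspan u n x -> x \in L.
Proof.
move=> torV u; elim=> [|n [L spanL]].
  by exists [:: 0] => x /zspan0n ->; rewrite inE.
have [o o_gt0 uo] := torV (u n).
exists [seq y + u n *+ i | y <- L, i <- iota 0 o] => _ [c <-]; rewrite zcombS.
have o_neq0 : o%:Z != 0 by rewrite eqz_nat -lt0n.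
have r_ge0 := modz_ge0 (c n) o_neq0.
have -> : u n *~ c n = u n *+ `|(c n %% o)%Z|%N.
  rewrite -[_ *+ _]/(u n *~ `|(c n %% o)%Z|%N) gez0_abs // {1}(divz_eq (c n) o).
  by rewrite mulrzDr mulrC mulrzA -[u n *~ o]/(u n *+ o) uo mul0rz add0r.
apply: allpairs_f; first by apply: spanL; exists c.
by rewrite mem_iota add0n -ltz_nat gez0_abs // ltz_pmod ?ltz_nat.
Qed.

Lemma root_notin : divisible V -> infinite_socles V ->
  forall (L : seq V) x p, prime p -> exists2 y, y *+ p = x & y \notin L.
Proof.
move=> divV socV L x p p_prime; have [y0 def_x] := divV x p p_prime.
have [z zp zL] := socV p p_prime [seq y - y0 | y <- L].
exists (y0 + z); first by rewrite mulrnDl zp addr0.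
by apply: contra zL => /(map_f (fun y => y - y0)); rewrite addrC addKr.
Qed.

Lemma zspan_prime_ideal u n (x : V) p : prime p ->
  zspan u n (x *+ p) -> ~ zspan u n x -> forall j, zspan u n (x *~ j) <-> (p %| j)%Z.
Proof.
move=> p_prime spanxp spanNx; have [m ideal] := zspan_mulz_ideal u n x.
suff -> : p = m by [].
have /ideal : zspan u n (x *~ p) by [].
rewrite dvdzE !absz_nat; case/primeP: p_prime => _ /[apply] /pred2P [m1 | // ].
by case: spanNx; apply/(ideal 1); rewrite m1.
Qed.

End TorsionDivisible.

Section Additive.
Variables (G H : zmodType) (f : G -> H).
Hypothesis fD : {morph f : x y / x + y}.

Lemma additive0 : f 0 = 0.
Proof. by apply: (addrI (f 0)); rewrite -fD !addr0. Qed.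

Lemma additiveB x y : f (x - y) = f x - f y.
Proof. by apply/eqP; rewrite eq_sym subr_eq -fD subrK. Qed.

Lemma additiveMn x m : f (x *+ m) = f x *+ m.
Proof. by elim: m => [|m IHm]; rewrite ?additive0 // !mulrS fD IHm. Qed.

End Additive.

(* [u i |-> v i] (i < n) extends to a homomorphism on the subgroup generated
   by the [u i]; [partial_iso] makes it an isomorphism onto its image. *)
Definition partial_hom (G H : zmodType) (u : nat -> G) (v : nat -> H) n :=
  forall c, zcomb u n c = 0 -> zcomb v n c = 0.

Definition partial_iso (G H : zmodType) (u : nat -> G) (v : nat -> H) n :=
  partial_hom u v n /\ partial_hom v u n.

Lemma eq_partial_hom (G H : zmodType) (u u' : nat -> G) (v v' : nat -> H) n :
  (forall i, (i < n)%N -> u i = u' i /\ v i = v' i) ->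
  partial_hom u v n -> partial_hom u' v' n.
Proof.
move=> eq_uv hom c; have eq_u i : (i < n)%N -> u' i = u i /\ c i = c i.
  by move=> /eq_uv [-> _].
have eq_v i : (i < n)%N -> v i = v' i /\ c i = c i by move=> /eq_uv [_ ->].
by rewrite (eq_zcomb eq_u) -(eq_zcomb eq_v); apply: hom.
Qed.

Lemma partial_hom_drop (G H : zmodType) (u : nat -> G) (v : nat -> H) n a b a' b' :
  partial_hom (upd (upd u n a) n.+1 b) (upd (upd v n a') n.+1 b') n.+2 ->
  partial_hom (upd u n b) (upd v n b') n.+1.
Proof.
by move=> hom c; rewrite -(zcomb_upd_drop _ _ a) -(zcomb_upd_drop _ _ a'); apply: hom.
Qed.

Lemma partial_iso_sym (G H : zmodType) (u : nat -> G) (v : nat -> H) n :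
  partial_iso u v n -> partial_iso v u n.
Proof. by case. Qed.

Lemma eq_partial_iso (G H : zmodType) (u u' : nat -> G) (v v' : nat -> H) n :
  (forall i, (i < n)%N -> u i = u' i /\ v i = v' i) ->
  partial_iso u v n -> partial_iso u' v' n.
Proof.
move=> eq_uv [uv vu].
by split; [apply: eq_partial_hom uv | apply: eq_partial_hom vu] => i /eq_uv [-> ->].
Qed.

Section PartialMapExtension.
Variables G H : zmodType.
Implicit Types (u : nat -> G) (v : nat -> H).

Lemma partial_hom_upd : divisible H ->
  forall u v n g, partial_hom u v n -> exists h, partial_hom (upd u n g) (upd v n h) n.+1.
Proof.
move=> divH u v n g hom; have [m ideal] := zspan_mulz_ideal u n g.
have [c0 def_g] : zspan u n (g *+ m) by apply/(ideal m).
have [h def_h] : exists h, h *+ m = zcomb v n c0.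
  have [m0 | m_gt0] := posnP m; last exact: divisible_mulrn.
  by exists 0; rewrite mul0rn; apply/esym/hom; rewrite def_g m0.
exists h => c /(zcomb_upd_eq0P ideal def_g) [q cn rel].
by rewrite (zcomb_upd_lift (esym def_h) cn) hom.
Qed.

Lemma partial_iso_upd_zspan u v n c0 :
  partial_iso u v n -> partial_iso (upd u n (zcomb u n c0)) (upd v n (zcomb v n c0)) n.+1.
Proof.
have cn c : c n = c n * 1%:Z by rewrite mulr1.
move=> [uv vu]; split=> c; rewrite !(zcomb_upd_lift (esym (mulr1n _)) (cn c)).
  exact: uv.
exact: vu.
Qed.

Section PartialIsoExtension.
Hypotheses (torG : torsion G) (torH : torsion H).
Hypotheses (divH : divisible H) (socH : infinite_socles H).

Lemma partial_iso_upd_root u v n g p c0 : prime p -> partial_iso u v n ->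
  zcomb u n c0 = g *+ p -> ~ zspan u n g ->
  exists h, partial_iso (upd u n g) (upd v n h) n.+1.
Proof.
move=> p_prime [uv vu] def_g spanNg.
have ideal_g := zspan_prime_ideal p_prime (ex_intro _ c0 def_g) spanNg.
have [L spanL] := zspan_finite torH v n.
have [h def_h hL] := root_notin divH socH L (zcomb v n c0) p_prime.
have ideal_h : forall j, zspan v n (h *~ j) <-> (p %| j)%Z.
  by apply: zspan_prime_ideal => // [|/spanL]; [exists c0 | apply/negP].
exists h; split=> c.
  move=> /(zcomb_upd_eq0P ideal_g def_g) [q cn rel].
  by apply/(zcomb_upd_eq0P ideal_h (esym def_h)); exists q => //; apply: uv.
move=> /(zcomb_upd_eq0P ideal_h (esym def_h)) [q cn rel].
by apply/(zcomb_upd_eq0P ideal_g def_g); exists q => //; apply: vu.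
Qed.

Lemma partial_iso_upd u v n g :
  partial_iso u v n -> exists h, partial_iso (upd u n g) (upd v n h) n.+1.
Proof.
have [m ideal] := zspan_mulz_ideal u n g.
have m_gt0 : (0 < m)%N.
  have [o o_gt0 go] := torG g.
  have /ideal : zspan u n (g *~ o) by rewrite -[g *~ _]/(g *+ o) go; apply: zspan0.
  by rewrite lt0n; apply: contraTneq => ->; rewrite dvd0z eqz_nat -lt0n.
elim/ltn_ind: m u v n g ideal m_gt0 => m IHm u v n g ideal m_gt0 iso.
have [c0 def_g] : zspan u n (g *+ m) by apply/(ideal m).
have [m_le1 | m_gt1] := leqP m 1.
  have m1 : m = 1%N by apply/eqP; rewrite eqn_leq m_le1.
  by exists (zcomb v n c0); rewrite -(mulr1n g) -m1 -def_g; apply: partial_iso_upd_zspan.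
(* m is the order of g modulo the span: adjoin g *+ (m / p) first. *)
set p := pdiv m; have p_prime : prime p := pdiv_prime m_gt1.
set m' := (m %/ p)%N; have def_m : (m' * p)%N = m by rewrite divnK // pdiv_dvd.
have m'_gt0 : (0 < m')%N by rewrite divn_gt0 ?pdiv_gt0 // dvdn_leq // pdiv_dvd.
have m'_ltm : (m' < m)%N := ltn_Pdiv (prime_gt1 p_prime) m_gt0.
have spanNgm' : ~ zspan u n (g *+ m').
  move=> /(ideal m'); rewrite dvdzE !absz_nat => /(dvdn_leq m'_gt0).
  by rewrite leqNgt m'_ltm.
have def_gm' : zcomb u n c0 = g *+ m' *+ p by rewrite -mulrnA def_m.
have [h' iso'] := partial_iso_upd_root p_prime iso def_gm' spanNgm'.
have [k ideal_k] := zspan_mulz_ideal (upd u n (g *+ m')) n.+1 g.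
have k_dvd_m' : (k %| m')%N.
  have /ideal_k : zspan (upd u n (g *+ m')) n.+1 (g *~ m').
    by exists (fun i => (i == n)%:Z); rewrite zcomb_delta // /upd eqxx.
  by rewrite dvdzE !absz_nat.
have k_gt0 : (0 < k)%N.
  by rewrite lt0n; apply: contraTneq k_dvd_m' => ->; rewrite dvd0n -lt0n.
have k_ltm : (k < m)%N := leq_ltn_trans (dvdn_leq m'_gt0 k_dvd_m') m'_ltm.
have [h [hom mor]] := IHm k k_ltm _ _ _ g ideal_k k_gt0 iso'.
by exists h; split; [apply: partial_hom_drop hom | apply: partial_hom_drop mor].
Qed.

End PartialIsoExtension.
End PartialMapExtension.

Section DependentChoice.
Variables (G H : zmodType) (R : (nat -> G) -> (nat -> H) -> nat -> Prop).
Variable P : nat -> G -> H -> Prop.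
Hypothesis R_local : forall u u' v v' n,
  (forall i, (i < n)%N -> u i = u' i /\ v i = v' i) -> R u v n -> R u' v' n.
Hypothesis R0 : R (fun=> 0) (fun=> 0) 0.
Hypothesis R_upd : forall u v n, R u v n ->
  exists g h, P n g h /\ R (upd u n g) (upd v n h) n.+1.

Lemma dependent_chain : exists u v, (forall n, R u v n) /\ forall n, P n (u n) (v n).
Proof.
pose extends u v n (gh : G * H) :=
  P n gh.1 gh.2 /\ R (upd u n gh.1) (upd v n gh.2) n.+1.
pose next u v n := epsilon (inhabits (0, 0)) (extends u v n).
have nextP u v n : R u v n -> extends u v n (next u v n).
  by move=> /R_upd [g [h gh]]; apply: epsilon_spec; exists (g, h).
pose fix chain n := if n is k.+1 then
    let: (u, v) := chain k in (upd u k (next u v k).1, upd v k (next u v k).2)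
  else (fun=> 0, fun=> 0).
have chainR n : R (chain n).1 (chain n).2 n.
  by elim: n => //= n; case: (chain n) => u v /= /nextP [].
have chain_stable i n : (i < n)%N ->
    (chain n).1 i = (chain i.+1).1 i /\ (chain n).2 i = (chain i.+1).2 i.
  elim: n => // n IHn; rewrite ltnS leq_eqVlt => /predU1P [-> // | ltin].
  have [<- <-] := IHn ltin; rewrite /=; case: (chain n) => u v.
  by rewrite /= /upd (ltn_eqF ltin).
exists (fun i => (chain i.+1).1 i), (fun i => (chain i.+1).2 i); split=> [n | n].
  by apply: R_local (chainR n) => i /chain_stable.
have := nextP _ _ _ (chainR n); rewrite /=; case: (chain n) => u v /= [Pn _].
by rewrite /upd eqxx.
Qed.

End DependentChoice.

Section Limits.
Variables (G H : zmodType) (u : nat -> G) (v : nat -> H).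
Hypothesis uv : forall n, partial_hom u v n.

Lemma limit_hom_eq i k : u i = u k -> v i = v k.
Proof.
move=> eq_ik; apply/eqP; rewrite -subr_eq0; pose n := (maxn i k).+1.
have [ltin ltkn] : (i < n)%N /\ (k < n)%N by rewrite !ltnS leq_maxl leq_maxr.
have := @uv n (fun l => (l == i)%:Z - (l == k)%:Z).
by rewrite !zcombD !zcombN !zcomb_delta // eq_ik subrr => /(_ erefl) ->.
Qed.

Lemma limit_hom_add i j k : u i + u j = u k -> v i + v j = v k.
Proof.
move=> eq_ijk; apply/eqP; rewrite -subr_eq0; pose n := (maxn i (maxn j k)).+1.
have [ltin ltjn ltkn] : [/\ (i < n)%N, (j < n)%N & (k < n)%N].
  by rewrite !ltnS leq_maxl !(leq_trans _ (leq_maxr i _)) ?leq_maxl ?leq_maxr.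
have := @uv n (fun l => (l == i)%:Z + (l == j)%:Z - (l == k)%:Z).
by rewrite !zcombD !zcombN !zcomb_delta // eq_ijk subrr => /(_ erefl) ->.
Qed.

Lemma partial_hom_limit : (forall x, exists i, u i = x) ->
  exists f : G -> H, {morph f : x y / x + y} /\ forall i, f (u i) = v i.
Proof.
move=> u_surj; have idx x : exists i, u i == x by have [i <-] := u_surj x; exists i.
exists (fun x => v (xchoose (idx x))); split=> [x y | i].
  by apply/esym/limit_hom_add; rewrite !(eqP (xchooseP (idx _))).
by apply: limit_hom_eq; rewrite (eqP (xchooseP (idx _))).
Qed.

End Limits.

Lemma partial_iso_limit (G H : zmodType) (u : nat -> G) (v : nat -> H) :
  (forall x, exists i, u i = x) -> (forall y, exists i, v i = y) ->
  (forall n, partial_iso u v n) ->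
  exists f : G -> H, bijective f /\ {morph f : x y / x + y}.
Proof.
move=> u_surj v_surj iso.
have [f [fD fu]] := partial_hom_limit (fun n => (iso n).1) u_surj.
have [g [_ gv]] := partial_hom_limit (fun n => (iso n).2) v_surj.
exists f; split=> //; exists g => [x | y].
  by have [i <-] := u_surj x; rewrite fu gv.
by have [i <-] := v_surj y; rewrite gv fu.
Qed.

Theorem prufer_type_iso (G H : countZmodType) : prufer_type G -> prufer_type H ->
  exists f : G -> H, bijective f /\ {morph f : x y / x + y}.
Proof.
move=> [torG divG socG] [torH divH socH].
pose eG n : G := odflt 0 (unpickle n); pose eH n : H := odflt 0 (unpickle n).
pose P n g h := if odd n then h = eH n./2 else g = eG n./2.
have iso0 : partial_iso (fun=> 0 : G) (fun=> 0 : H) 0 by split=> c _; apply: zcomb0n.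
have step u v n : partial_iso u v n ->
    exists g h, P n g h /\ partial_iso (upd u n g) (upd v n h) n.+1.
  move=> iso; rewrite /P; case: (odd n).
    have [g iso'] := partial_iso_upd torH torG divG socG (eH n./2) (partial_iso_sym iso).
    by exists g, (eH n./2); split; last apply: partial_iso_sym.
  have [h iso'] := partial_iso_upd torG torH divH socH (eG n./2) iso.
  by exists (eG n./2), h.
have [u [v [iso uv]]] := dependent_chain (@eq_partial_iso G H) iso0 step.
apply: partial_iso_limit iso => [x | y].
  by exists (pickle x).*2; have := uv (pickle x).*2; rewrite /P odd_double doubleK /eG pickleK.
exists (pickle y).*2.+1; have := uv (pickle y).*2.+1.
by rewrite /P /= odd_double uphalf_double /eH pickleK.
Qed.

Lemma hom_extension (G : countZmodType) (H : zmodType) (d : G) (e : H) :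
  divisible H -> (forall j, d *~ j = 0 -> e *~ j = 0) ->
  exists f : G -> H, {morph f : x y / x + y} /\ f d = e.
Proof.
move=> divH de; pose eG n : G := odflt 0 (unpickle n).
pose P n g h := if n is k.+1 then g = eG k else g = d /\ h = e.
have hom0 : partial_hom (fun=> 0 : G) (fun=> 0 : H) 0 by move=> c _; apply: zcomb0n.
have step u v n : partial_hom u v n ->
    exists g h, P n g h /\ partial_hom (upd u n g) (upd v n h) n.+1.
  case: n => [_ | n hom].
    by exists d, e; split=> // c; rewrite !zcomb_upd !zcomb0n !add0r; apply: de.
  by have [h hom'] := partial_hom_upd divH (eG n) hom; exists (eG n), h.
have [u [v [hom uv]]] := dependent_chain (@eq_partial_hom G H) hom0 step.
have [x | f [fD fu]] := partial_hom_limit hom.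
  by exists (pickle x).+1; have := uv (pickle x).+1; rewrite /P /eG pickleK.
by exists f; split=> //; have [<- <-] := uv 0%N.
Qed.

Lemma hom_nonzero_at (G : countZmodType) (H : zmodType) (d : G) :
  divisible H -> infinite_socles H -> d != 0 ->
  exists f : G -> H, {morph f : x y / x + y} /\ f d != 0.
Proof.
move=> divH socH d_neq0; have [m ideal] := zspan_mulz_ideal (fun=> d) 0 d.
have order j : d *~ j = 0 -> (m %| j)%Z by move=> dj; apply/ideal/zspan0n.
have m_neq1 : m != 1%N.
  by apply: contra_neq d_neq0 => m1; apply/(zspan0n (fun=> d))/(ideal 1); rewrite m1.
have [p p_prime p_dvd_m] : exists2 p, prime p & (p %| m)%N.
  case: m {ideal order} m_neq1 => [|[|m]] // _; first by exists 2%N.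
  by exists (pdiv m.+2); rewrite ?pdiv_prime ?pdiv_dvd.
have [e ep] := socH p p_prime [:: 0]; rewrite inE => e_neq0.
have [j /order | f [fD fd]] := hom_extension (d := d) (e := e) divH.
  rewrite !dvdzE !absz_nat => /(dvdn_trans p_dvd_m).
  rewrite -(absz_nat p) -dvdzE => /dvdzP [q ->].
  by rewrite mulrC mulrzA -[e *~ _]/(e *+ p) ep mul0rz.
by exists f; rewrite fd.
Qed.

Definition pair_group (H : countZmodType) : Type := (H * H)%type.
HB.instance Definition _ (H : countZmodType) := GRing.Zmodule.copy (pair_group H) (H * H)%type.
HB.instance Definition _ (H : countZmodType) := Countable.copy (pair_group H) (H * H)%type.

Section PairGroup.
Variable H : countZmodType.

Lemma pair_mulrn (a b : H) m : ((a, b) : pair_group H) *+ m = (a *+ m, b *+ m).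
Proof. by elim: m => // m IHm; rewrite !mulrS IHm. Qed.

Lemma prufer_type_pair : prufer_type H -> prufer_type (pair_group H).
Proof.
move=> [torH divH socH]; split.
- move=> [a b]; have [m m_gt0 am] := torH a; have [k k_gt0 bk] := torH b.
  exists (m * k)%N; first by rewrite muln_gt0 m_gt0.
  by rewrite pair_mulrn mulrnA am mul0rn mulnC mulrnA bk mul0rn.
- move=> [a b] p p_prime; have [a' <-] := divH a p p_prime; have [b' <-] := divH b p p_prime.
  by exists (a', b'); rewrite pair_mulrn.
move=> p p_prime s; have [z zp zs] := socH p p_prime [seq x.1 | x : pair_group H <- s].
exists (z, 0); first by rewrite pair_mulrn zp mul0rn.
by apply: contra zs => /(map_f fst).
Qed.

End PairGroup.

Lemma separating_hom (G H : countZmodType) (D : seq G) : prufer_type H ->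
  exists f : G -> H, {morph f : x y / x + y} /\ forall d, d \in D -> d != 0 -> f d != 0.
Proof.
move=> PH; have [_ divH socH] := PH; elim: D => [|d D [psi [psiD psiN]]].
  by exists (fun=> 0); split=> // x y; rewrite addr0.
have [-> | d_neq0] := eqVneq d 0.
  by exists psi; split=> // x; rewrite inE => /predU1P [-> /eqP | /psiN].
have [chi [chiD chid]] := hom_nonzero_at divH socH d_neq0.
have [iota [iota_bij iotaD]] := prufer_type_iso (prufer_type_pair PH) PH.
exists (fun x => iota (psi x, chi x)); split=> [x y | x].
  by rewrite psiD chiD -iotaD.
rewrite inE -(additive0 iotaD) (inj_eq (bij_inj iota_bij)).
case/predU1P=> [-> _ | /psiN psix /psix]; first by apply: contra chid => /eqP [_ ->].
by apply: contra => /eqP [-> _].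
Qed.

Lemma prufer_type_bij (V W : zmodType) (f : W -> V) :
  bijective f -> {morph f : x y / x + y} -> prufer_type V -> prufer_type W.
Proof.
move=> [g fK gK] fD [torV divV socV].
have f0 := additive0 fD; have fMn := additiveMn fD.
have f_eq0 x : f x = 0 -> x = 0 by rewrite -f0 => /(can_inj fK).
split.
- by move=> x; have [m m_gt0 xm] := torV (f x); exists m => //; apply: f_eq0; rewrite fMn.
- move=> x p p_prime; have [y yp] := divV (f x) p p_prime.
  by exists (g y); apply: (can_inj fK); rewrite fMn gK.
move=> p p_prime s; have [z zp zs] := socV p p_prime (map f s).
exists (g z); first by apply: f_eq0; rewrite fMn gK.
by apply: contra zs => /(map_f f); rewrite gK.
Qed.

(** * Groups given by multiplication tables *)

Local Close Scope ring_scope.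

Definition tgroup (M : table) of abelian_tables M : Type := nat.

Section TableGroup.
Variables (M : table) (abM : abelian_tables M).

Lemma tgroup_inv_ex (x : nat) : exists y, M x y == 0.
Proof. by have [[_ [_ /(_ x) [y [xy _]]]] _] := abM; exists y; apply/eqP. Qed.

Definition topp (x : tgroup abM) : tgroup abM := xchoose (tgroup_inv_ex x).

Lemma taddA : associative (M : tgroup abM -> tgroup abM -> tgroup abM).
Proof. by have [[assoc _] _] := abM; move=> x y z; rewrite assoc. Qed.

Lemma taddC : commutative (M : tgroup abM -> tgroup abM -> tgroup abM).
Proof. by have [] := abM. Qed.

Lemma tadd0 : left_id (0 : tgroup abM) M.
Proof. by have [[_ [id0 _]] _] := abM; move=> x; case: (id0 x). Qed.

Lemma taddN : left_inverse (0 : tgroup abM) topp M.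
Proof. by move=> x; rewrite taddC; apply/eqP/(xchooseP (tgroup_inv_ex x)). Qed.

End TableGroup.

HB.instance Definition _ M abM := Countable.copy (@tgroup M abM) nat.
HB.instance Definition _ M abM :=
  GRing.isZmodule.Build (@tgroup M abM)
    (@taddA M abM) (@taddC M abM) (@tadd0 M abM) (@taddN M abM).

Fixpoint tpow (M : table) m x := if m is k.+1 then M x (tpow M k x) else 0.

Lemma tgroup_mulrn M (abM : abelian_tables M) (x : tgroup abM) m : (x *+ m)%R = tpow M m x.
Proof. by elim: m => // m IHm; rewrite mulrS IHm. Qed.

Definition torsion_at x (M : table) := exists2 m, 0 < m & tpow M m x = 0.

Definition divisible_at x p (M : table) := prime p -> exists y, tpow M p y = x.

Definition socle_at p k (M : table) :=
  prime p -> exists2 s : seq nat, uniq s /\ size s = k & all (fun z => tpow M p z == 0) s.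

Definition table_condition (c : nat + nat * nat + nat * nat) (M : table) :=
  match c with
  | inl (inl x) => torsion_at x M
  | inl (inr (x, p)) => divisible_at x p M
  | inr (p, k) => socle_at p k M
  end.

Lemma prufer_type_conditions M (abM : abelian_tables M) :
  prufer_type (tgroup abM) <-> forall c, table_condition c M.
Proof.
split=> [[torM divM socM] [[x | [x p]] | [p k]] /= | conds].
- by have [m m_gt0 xm] := torM x; exists m; rewrite -?tgroup_mulrn.
- by move=> p_prime; have [y yp] := divM x p p_prime; exists y; rewrite -tgroup_mulrn.
- move=> p_prime; elim: k => [|k [s [s_uniq size_s] s_socle]]; first by exists [::].
  have [z zp zs] := socM p p_prime s.
  exists (z :: s); first by rewrite /= zs s_uniq size_s.
  by rewrite /= s_socle -tgroup_mulrn zp eqxx.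
split.
- by move=> x; have [m m_gt0 xm] := conds (inl (inl x)); exists m; rewrite ?tgroup_mulrn.
- move=> x p p_prime; have [y yp] := conds (inl (inr (x, p))) p_prime.
  by exists y; rewrite tgroup_mulrn.
move=> p p_prime s; have [s' [s'_uniq size_s'] s'_socle] := conds (inr (p, (size s).+1)) p_prime.
have [/allP s'_s | /allPn [z z_s' z_s]] := boolP (all (mem s) s').
  by have := uniq_leq_size s'_uniq s'_s; rewrite size_s' ltnn.
by exists z; rewrite // tgroup_mulrn; apply/eqP/(allP s'_socle).
Qed.

Definition local (P : table -> Prop) :=
  forall M, P M -> exists n, forall M', agree n M M' -> P M'.

Lemma openIn_local P : local P -> openIn abelian_tables (fun M => abelian_tables M /\ P M).
Proof.
move=> locP; split=> [M [] // | M [_ /locP [n PM']]].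
by exists n => M' abM' agreeM'; split; last apply: PM'.
Qed.

Lemma ex_upper_bound (s : seq nat) : exists n, forall i, i \in s -> i < n.
Proof. by exists (\max_(i <- s) i).+1 => i i_s; rewrite ltnS (leq_bigmax_seq i). Qed.

Lemma agree_le m n M M' : m <= n -> agree n M M' -> agree m M M'.
Proof. by move=> le_mn agreeM' x y ltxm ltym; apply: agreeM'; apply: leq_trans le_mn. Qed.

Lemma tpow_agree n M M' m x : agree n M M' -> x < n ->
  (forall j, j < m -> tpow M j x < n) -> tpow M' m x = tpow M m x.
Proof.
move=> agreeM' x_lt; elim: m => // m IHm pow_lt /=.
by rewrite IHm => [|j /ltnW /pow_lt //]; rewrite agreeM' ?pow_lt.
Qed.

Lemma tpow_local M m (s : seq nat) :
  exists n, forall M', agree n M M' -> forall x, x \in s -> tpow M' m x = tpow M m x.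
Proof.
elim: s => [|x s [n IHs]]; first by exists 0.
have [nx bound] := ex_upper_bound (x :: [seq tpow M j x | j <- iota 0 m]).
exists (maxn n nx) => M' agreeM' y; rewrite inE => /predU1P [-> | y_s].
  apply: tpow_agree (agree_le (leq_maxr _ _) agreeM') _ _.
    by apply: bound; rewrite mem_head.
  move=> j ltjm; apply: bound; rewrite inE (map_f (fun j => tpow M j x)) ?orbT //.
  by rewrite mem_iota.
exact: IHs (agree_le (leq_maxl _ _) agreeM') _ y_s.
Qed.

Lemma local_table_condition c : local (table_condition c).
Proof.
move=> M; case: c => [[x | [x p]] | [p k]] /=.
- move=> [m m_gt0 xm]; have [n agree_pow] := tpow_local M m [:: x].
  by exists n => M' /agree_pow pow'; exists m; rewrite // pow' ?mem_head.
- have [p_prime divx | p_nprime _] := boolP (prime p); last by exists 0 => M' _ /(negP p_nprime).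
  have [y yp] := divx p_prime; have [n agree_pow] := tpow_local M p [:: y].
  by exists n => M' /agree_pow pow' _; exists y; rewrite pow' ?mem_head.
have [p_prime socp | p_nprime _] := boolP (prime p); last by exists 0 => M' _ /(negP p_nprime).
have [s s_ok s_socle] := socp p_prime; have [n agree_pow] := tpow_local M p s.
exists n => M' /agree_pow pow' _; exists s => //.
by apply/allP => z z_s; rewrite pow' // (allP s_socle).
Qed.

Definition swapn (a b x : nat) := if x == a then b else if x == b then a else x.

Lemma swapnK a b : involutive (swapn a b).
Proof.
move=> x; rewrite /swapn; case: (eqVneq x a) => [-> | neq_xa].
  by rewrite eqxx; case: eqVneq.
case: (eqVneq x b) => [-> | neq_xb]; first by rewrite eqxx.
by rewrite (negPf neq_xa) (negPf neq_xb).
Qed.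

Lemma perm_extension (F : seq nat) (f : nat -> nat) : uniq F -> {in F &, injective f} ->
  exists2 pi : nat -> nat, bijective pi & {in F, pi =1 f}.
Proof.
elim: F => [|x F IHF] /=; first by exists id => //; exists id.
case/andP=> x_F F_uniq f_inj.
have [|pi pi_bij pi_f] := IHF F_uniq.
  by move=> y z y_F z_F; apply: f_inj; rewrite inE ?y_F ?z_F orbT.
exists (swapn (pi x) (f x) \o pi).
  by apply: bij_comp => //; apply: inv_bij (swapnK _ _).
move=> y; rewrite inE => /predU1P [-> | y_F]; first by rewrite /= /swapn eqxx.
have neq_yx : y != x by apply: contraNneq x_F => <-.
rewrite /= /swapn pi_f // ifN; last first.
  by rewrite -pi_f //; apply: contra neq_yx => /eqP /(bij_inj pi_bij) ->.
by rewrite ifN //; apply: contra neq_yx => /eqP /f_inj -> //; rewrite inE ?eqxx ?y_F ?orbT.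
Qed.

Definition transport (pi pi' : nat -> nat) (A : table) : table :=
  fun x y => pi' (A (pi x) (pi y)).

Section Transport.
Variables (pi pi' : nat -> nat) (A : table).
Hypotheses (piK : cancel pi pi') (pi'K : cancel pi' pi) (pi0 : pi 0 = 0).

Lemma abelian_transport : abelian_tables A -> abelian_tables (transport pi pi' A).
Proof.
move=> [[assoc [id0 inv]] comm]; rewrite /transport; split; [split; [|split]|].
- by move=> x y z; rewrite !pi'K assoc.
- by move=> x; rewrite pi0; have [-> ->] := id0 (pi x); rewrite piK.
- move=> x; have [y [xy yx]] := inv (pi x); exists (pi' y).
  by rewrite pi'K xy yx -pi0 piK.
- by move=> x y; rewrite comm.
Qed.

Lemma iso_transport : iso_tables (transport pi pi' A) A.
Proof. by exists pi; split=> [|x y]; [exists pi' | rewrite /transport pi'K]. Qed.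

End Transport.

Lemma iso_tables_tgroup M A (abM : abelian_tables M) (abA : abelian_tables A) :
  iso_tables M A <->
  exists f : tgroup abM -> tgroup abA, bijective f /\ {morph f : x y / (x + y)%R}.
Proof. by []. Qed.

Lemma iso_tables_dense A (abA : abelian_tables A) : prufer_type (tgroup abA) ->
  forall M n, abelian_tables M ->
  exists M', [/\ abelian_tables M', iso_tables M' A & agree n M M'].
Proof.
move=> PA M n abM.
(* Transport A along a permutation extending an embedding of [0, N) into A. *)
have [N N_bound] := ex_upper_bound (n :: [seq M x y | x <- iota 0 n, y <- iota 0 n]).
pose F := iota 0 N; pose D := [seq (x : tgroup abM) - y | x <- F, y <- F]%R.
have [psi [psiD psi_sep]] := separating_hom D PA.
have psi_inj : {in F &, injective psi}.
  move=> x y x_F y_F eq_psi; apply/eqP; rewrite -subr_eq0; apply/negPn/negP => neq_xy.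
  have := psi_sep _ (allpairs_f (fun x y => (x : tgroup abM) - y)%R x_F y_F) neq_xy.
  by rewrite (additiveB psiD) eq_psi subrr eqxx.
have [pi [pi' piK pi'K] pi_psi] := perm_extension (iota_uniq 0 N) psi_inj.
have n_lt_N : n < N by apply: N_bound; rewrite mem_head.
have F_lt x : x < N -> x \in F by rewrite mem_iota.
have pi0 : pi 0 = 0 by rewrite pi_psi ?F_lt ?(leq_ltn_trans (leq0n n)) // (additive0 psiD).
exists (transport pi pi' A); split.
- exact: abelian_transport.
- exact: iso_transport.
move=> x y x_lt y_lt; rewrite /transport !pi_psi ?F_lt ?(ltn_trans _ n_lt_N) //.
rewrite -[A _ _]/(psi x + psi y)%R -psiD -pi_psi ?piK // F_lt // N_bound // inE.
by rewrite (allpairs_f M) ?orbT // mem_iota.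
Qed.

Theorem iso_class_comeager A (abA : abelian_tables A) : prufer_type (tgroup abA) ->
  comeagerIn abelian_tables (fun G => is_group_table G /\ iso_tables G A).
Proof.
move=> PA.
pose U k M := abelian_tables M /\ oapp (table_condition^~ M) True (unpickle k).
have conditions_iso M (abM : abelian_tables M) :
    iso_tables M A -> forall c, table_condition c M.
  move=> /(iso_tables_tgroup abM abA) [f [f_bij fD]].
  exact: (prufer_type_conditions abM).1 (prufer_type_bij f_bij fD PA).
exists U; split=> [k | M abM allU]; first split.
- apply: openIn_local; case: (unpickle k) => [c|] /=; first exact: local_table_condition.
  by move=> M _; exists 0.
- move=> M n abM; have [M' [abM' isoM' agreeM']] := iso_tables_dense PA n abM.
  exists M'; do 2 split=> //; split=> //.
  by case: (unpickle k) => //= c; apply: conditions_iso.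
split; first by case: abM.
apply/(iso_tables_tgroup abM abA)/prufer_type_iso => //.
by apply/prufer_type_conditions => c; have [_] := allU (pickle c); rewrite pickleK.
Qed.

(** * The Pruefer sum *)

Local Open Scope ring_scope.

Definition frac (x : rat) : rat := x - (Num.floor x)%:~R.

Lemma frac_itv x : 0 <= frac x < 1.
Proof. by rewrite /frac subr_ge0 ltrBlDl -[1]/(1%:~R) -intrD floor_itv. Qed.

Lemma frac_id x : 0 <= x < 1 -> frac x = x.
Proof. by move=> x01; rewrite /frac (@floor_def _ x 0) ?subr0. Qed.

Lemma frac0 : frac 0 = 0.
Proof. by rewrite frac_id // lexx ltr01. Qed.

Lemma frac_addz x z : z \is a Num.int -> frac (x + z) = frac x.
Proof.
by move=> z_int; rewrite /frac floorDrz // intrD (floorK z_int) opprD addrACA subrr addr0.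
Qed.

Lemma frac_eq x y : x - y \is a Num.int -> frac x = frac y.
Proof. by move=> xy_int; rewrite -(frac_addz y xy_int) addrC subrK. Qed.

Lemma frac_int x : x \is a Num.int -> frac x = 0.
Proof. by move=> x_int; rewrite -(add0r x) frac_addz // frac0. Qed.

Lemma sub_frac_int x : x - frac x \is a Num.int.
Proof. by rewrite /frac opprB addrC subrK intr_int. Qed.

Lemma add_mod1_frac a b : 0 <= a < 1 -> 0 <= b < 1 -> add_mod1 a b = frac (a + b).
Proof.
move=> /andP [a_ge0 a_lt1] /andP [b_ge0 b_lt1]; rewrite /add_mod1; case: ifP => ab_ge1.
  have N1_int : -1 \is a @Num.int rat by rewrite rpredN rpred1.
  rewrite -(frac_addz (a + b) N1_int) frac_id //.
  by rewrite subr_ge0 ab_ge1 ltrBlDr ltrD.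
by rewrite frac_id // addr_ge0 //= ltNge ab_ge1.
Qed.

Lemma frac_mulz x z : z \is a Num.int -> frac (z * frac x) = frac (z * x).
Proof.
move=> z_int; apply: frac_eq; rewrite -mulrBr -opprB mulrN rpredN.
by rewrite rpredM ?sub_frac_int.
Qed.

Lemma frac_mul_int x y : x * y \is a Num.int -> y \is a Num.int -> frac x * y \is a Num.int.
Proof.
move=> xy_int y_int; have -> : frac x * y = x * y - (x - frac x) * y by ring.
by apply: rpredB => //; apply: rpredM => //; apply: sub_frac_int.
Qed.

Lemma denq_dvd_int x (n : int) : (denq x %| n)%Z -> x * n%:~R \is a Num.int.
Proof. by move=> /dvdzP [k ->]; rewrite intrM mulrCA -numqE -intrM intr_int. Qed.

Lemma denq_prime_power p x : prime p ->
  (exists k, x * (p ^ k)%:R \is a Num.int) -> exists k, denq x = (p ^ k)%:Z.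
Proof.
move=> p_prime [k /floorK xpk_int]; set z := Num.floor _ in xpk_int.
have num_pk : numq x * (p ^ k)%:Z = z * denq x.
  apply: (@intr_inj rat); rewrite !intrM numqE -mulrA (mulrC (denq x)%:~R) mulrA.
  by rewrite -pmulrn xpk_int.
have : (`|denq x| %| `|numq x| * p ^ k)%N.
  by apply/dvdnP; exists `|z|%N; rewrite -abszM -num_pk abszM absz_nat.
rewrite Gauss_dvdr; last by rewrite coprime_sym coprime_num_den.
case/(dvdn_pfactor _ _ p_prime) => m _ den_pm.
by exists m; rewrite -den_pm gtz0_abs // denq_gt0.
Qed.

Section PruferSumModel.
Variables (A : table) (f : nat -> nat -> nat -> rat).
Hypotheses (gA : is_group_table A) (f_inj : forall x y, f x = f y -> x = y).
Hypotheses (f_onto : forall h, prufer_sum_elt h <-> exists x, f x = h).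
Hypothesis fA : forall x y, f (A x y) = prufer_sum_add (f x) (f y).

Lemma prufer_sum_elt_f x : prufer_sum_elt (f x).
Proof. by apply/f_onto; exists x. Qed.

Lemma f_itv x p i : 0 <= f x p i < 1.
Proof. by have [] := prufer_sum_elt_f x. Qed.

Lemma f_ext x y : (forall p i, f x p i = f y p i) -> x = y.
Proof. by move=> fxy; apply: f_inj; do 2 apply: functional_extensionality => ?. Qed.

Lemma abelian_prufer_sum : abelian_tables A.
Proof. by split=> // x y; apply: f_ext => p i; rewrite !fA /prufer_sum_add /add_mod1 addrC. Qed.

Let abA := abelian_prufer_sum.

Lemma f0 p i : f 0%N p i = 0.
Proof.
have [_ [/(_ 0%N) [A00 _] _]] := gA.
have := congr1 (fun h => h p i) (fA 0 0); rewrite A00 /prufer_sum_add /add_mod1.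
by have := f_itv 0 p i; case: ifP => _ /=; lra.
Qed.

Lemma f_mulrn (x : tgroup abA) m p i : f (x *+ m) p i = frac (m%:R * f x p i).
Proof.
elim: m => [|m IHm]; first by rewrite mulr0n f0 mul0r frac0.
rewrite mulrS [f _]fA /prufer_sum_add IHm add_mod1_frac ?f_itv ?frac_itv //.
apply: frac_eq; set y := m%:R * f x p i.
have -> : f x p i + frac y - m.+1%:R * f x p i = - (y - frac y) by rewrite /y mulrSr; ring.
by rewrite rpredN sub_frac_int.
Qed.

Lemma torsion_prufer_sum : torsion (tgroup abA).
Proof.
move=> x; have [_ [_ [_ [N supp_x]]]] := prufer_sum_elt_f x.
pose m := (\prod_(p < N) \prod_(i < N) `|denq (f x p i)|)%N.
have m_gt0 : (0 < m)%N.
  by rewrite prodn_gt0 // => p; rewrite prodn_gt0 // => i; rewrite absz_gt0 denq_neq0.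
exists m => //; apply: f_ext => p i; rewrite f_mulrn f0.
have [p_ge | p_lt] := leqP N p; first by rewrite supp_x ?mulr0 ?frac0 //; left.
have [i_ge | i_lt] := leqP N i; first by rewrite supp_x ?mulr0 ?frac0 //; right.
apply: frac_int; rewrite mulrC pmulrn denq_dvd_int // dvdzE absz_nat.
rewrite /m (bigD1 (Ordinal p_lt)) //= dvdn_mulr //.
by rewrite (bigD1 (Ordinal i_lt)) //= dvdn_mulr.
Qed.

Lemma support_bound (s : seq nat) :
  exists N, forall z, z \in s -> forall p i, (N <= i)%N -> f z p i = 0.
Proof.
elim: s => [|z s [N supp_s]]; first by exists 0%N.
have [_ [_ [_ [Nz supp_z]]]] := prufer_sum_elt_f z.
exists (maxn N Nz) => y; rewrite inE => /predU1P [-> | y_s] p i.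
  by rewrite geq_max => /andP [_ le_Nz]; apply: supp_z; right.
by rewrite geq_max => /andP [le_N _]; apply: supp_s.
Qed.

Lemma socles_prufer_sum : infinite_socles (tgroup abA).
Proof.
move=> p p_prime s; have [N supp_s] := support_bound s.
have p_neq0 : p%:R != 0 :> rat by rewrite pnatr_eq0 -lt0n prime_gt0.
pose e q j : rat := if (q == p) && (j == N) then p%:R^-1 else 0.
have e_elt : prufer_sum_elt e.
  split; [|split; [|split]].
  - move=> q j; rewrite /e; case: ifP => _; last by rewrite lexx ltr01.
    by rewrite invr_ge0 ler0n invf_lt1 ?ltr0n ?prime_gt0 // ltr1n prime_gt1.
  - by move=> q j q_nprime; rewrite /e; case: eqP => // q_p; rewrite q_p p_prime in q_nprime.
  - move=> q j q_prime; apply: denq_prime_power => //; exists 1%N; rewrite expn1 /e.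
    by case: ifP => [/andP [/eqP -> _] | _]; rewrite ?mulVf ?mul0r ?rpred0 ?rpred1.
  - exists (maxn p N).+1 => q j; rewrite /e; case: ifP => // /andP [/eqP -> /eqP ->].
    by rewrite ltnNge leq_maxl ltnNge leq_maxr; case.
have [x fx] := (f_onto e).1 e_elt.
exists x.
  apply: f_ext => q j; rewrite f_mulrn f0 fx /e; case: ifP => _; last by rewrite mulr0 frac0.
  by rewrite mulfV // frac_int ?rpred1.
apply/negP => /supp_s /(_ p N (leqnn N)); rewrite fx /e !eqxx /=.
by apply/eqP; rewrite invr_eq0.
Qed.

Lemma divisible_prufer_sum : divisible (tgroup abA).
Proof.
move=> x q q_prime; have [h_itv [h_nprime [h_den [N supp_h]]]] := prufer_sum_elt_f x.
set h := f x in h_itv h_nprime h_den supp_h *.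
have q_neq0 : q%:R != 0 :> rat by rewrite pnatr_eq0 -lt0n prime_gt0.
(* Off the q-coordinate, q is inverted modulo d by q ^ (totient d - 1). *)
pose u p i := (q ^ (totient `|denq (h p i)|).-1)%N.
pose h' p i := if p == q then frac (h p i / q%:R) else frac ((u p i)%:R * h p i).
have q_coprime p i : p != q -> coprime q `|denq (h p i)|.
  move=> p_neq_q; have [p_prime | p_nprime] := boolP (prime p).
    have [k ->] := h_den p i p_prime; rewrite absz_nat coprimeXr //.
    by rewrite prime_coprime // dvdn_prime2 // eq_sym.
  by rewrite h_nprime // (_ : denq 0 = 1) // coprimen1.
have h'_elt : prufer_sum_elt h'.
  split; [|split; [|split]].
  - by move=> p i; rewrite /h'; case: ifP => _; apply: frac_itv.
  - move=> p i p_nprime; rewrite /h' h_nprime // mul0r mulr0 frac0.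
    by case: eqP => // p_q; rewrite p_q q_prime in p_nprime.
  - move=> p i p_prime; apply: denq_prime_power => //.
    have [k den_h] := h_den p i p_prime.
    have hpk_int : h p i * (p ^ k)%:R \is a Num.int.
      by have := intr_int rat (numq (h p i)); rewrite numqE den_h.
    rewrite /h'; case: eqP => [p_q | _].
      exists k.+1; apply: frac_mul_int; rewrite ?natr_int //.
      by rewrite expnSr natrM mulrCA p_q divfK // mulrC -p_q.
    by exists k; apply: frac_mul_int; rewrite ?natr_int // -mulrA rpredM ?natr_int.
  - by exists N => p i /supp_h h0; rewrite /h' h0 mul0r mulr0; case: ifP => _; apply: frac0.
have [y fy] := (f_onto h').1 h'_elt.
exists y; apply: f_ext => p i; rewrite f_mulrn fy /h'.
case: eqP => [-> | /eqP p_neq_q]; rewrite frac_mulz ?natr_int //.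
  by rewrite mulrC divfK // frac_id.
rewrite -[RHS]frac_id //; apply: frac_eq.
have den_gt0 : (0 < `|denq (h p i)|)%N by rewrite absz_gt0 denq_neq0.
have uq : (u p i * q = q ^ totient `|denq (h p i)|)%N.
  by rewrite -expnSr prednK // totient_gt0.
have uq_ge1 : (1 <= u p i * q)%N by rewrite uq expn_gt0 prime_gt0.
have den_dvd : (`|denq (h p i)| %| u p i * q - 1)%N.
  by rewrite -eqn_mod_dvd // uq; apply/eqP/Euler_exp_totient/q_coprime.
have -> : q%:R * ((u p i)%:R * h p i) - h p i = h p i * ((u p i * q - 1)%N%:Z)%:~R.
  by rewrite -pmulrn natrB // natrM; ring.
by apply: denq_dvd_int; rewrite dvdzE absz_nat.
Qed.

Lemma prufer_type_prufer_sum : prufer_type (tgroup abA).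
Proof.
split; [exact: torsion_prufer_sum | exact: divisible_prufer_sum | exact: socles_prufer_sum].
Qed.

End PruferSumModel.

Theorem corollary8p7 (A : table) :
  is_group_table A -> iso_to_prufer_sum A ->
  comeagerIn abelian_tables (fun G => is_group_table G /\ iso_tables G A).
Proof.
move=> gA [f [f_inj [f_onto fA]]].
exact: iso_class_comeager (prufer_type_prufer_sum gA f_inj f_onto fA).
Qed.
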